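(* Under the hypotheses of the $O(\tau)$ convergence theorem, the limit curve $X:[0,\infty)\to\mathbb H$ of $\underline X_t^\tau$ is locally absolutely continuous in $\mathbb H$ and solves \[\dot X(t)=-\nabla\phi^{\#}_{\rho_0}(X(t))\ \text{ for a.e. }t\in(0,\infty),\qquad X(0)=\mathrm{Id},\] where $\dot X$ is the Fréchet (time) derivative of $X:[0,\infty)\to\mathbb H$.
   Context: Hypotheses of the $O(\tau)$ convergence theorem: the standing hypotheses (S) below hold for every $\tau$ in a family $\tau\downarrow0$ (and $|\lambda|\tau<1$ if $\lambda<0$), with $\lim_{\tau\downarrow0}\|X_0^\tau-\mathrm{Id}\|_{\mathbb H}=0$ and $\sup_\tau\|\nabla\phi^{\#}_{\rho_0}(X_0^\tau)\|_{\mathbb H}<\infty$; $\underline X_t^\tau:=X_n^\tau$ for $t\in[n\tau,(n+1)\tau)$, and $\underline X^\tau$ converges locally uniformly in $\mathbb H$ to a locally Lipschitz curve $X$. Standing hypotheses (S): $\rho_0\in\mathcal P_2(\mathbb R^d)$; $\mathbb H=L^2(\mathbb R^d;\rho_0)$ is the Hilbert space of $\rho_0$-square-integrable maps $\mathbb R^d\to\mathbb R^d$; $\phi:\mathcal P_2(\mathbb R^d)\to\mathbb R$ has lift $\phi^{\#}_{\rho_0}(\xi):=\phi(\xi_{\#}\rho_0)$ which is Fréchet differentiable on $\mathbb H$ (gradient $\nabla\phi^{\#}_{\rho_0}$), $\lambda$-convex on $\mathbb H$ for some $\lambda\in\mathbb R$, and $\inf_{\mathbb H}\phi^{\#}_{\rho_0}>-\infty$;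 $\tau>0$ satisfies $\lambda/2+1/\tau>0$. Scheme: $X_{n+1}^\tau$ is the unique minimizer over $\xi\in\mathbb H$ of $\tfrac12\phi^{\#}_{\rho_0}(\xi)+\tfrac12\langle\nabla\phi^{\#}_{\rho_0}(X_n^\tau),\xi\rangle_{\mathbb H}+\tfrac1{2\tau}\|\xi-X_n^\tau\|^2_{\mathbb H}$. *)

From HB Require Import structures.
From mathcomp Require Import all_boot all_order all_algebra.
From mathcomp Require Import all_classical all_reals all_analysis.
Set Implicit Arguments. Unset Strict Implicit. Unset Printing Implicit Defensive.
Import Order.TTheory GRing.Theory Num.Theory.
Import numFieldNormedType.Exports.
Local Open Scope classical_set_scope.
Local Open Scope ring_scope.

Definition BRd (R : realType) (d : nat) :=
  g_sigma_algebraType (@open 'rV[R]_d).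

Definition dotRd (R : realType) (d : nat) (x y : 'rV[R]_d) : R :=
  \sum_(i < d) x ord0 i * y ord0 i.
Definition sqnRd (R : realType) (d : nat) (x : 'rV[R]_d) : R := dotRd x x.

Definition finite_second_moment (R : realType) (d : nat)
  (rho0 : probability (BRd R d) R) : Prop :=
  (\int[rho0]_x (sqnRd (x : 'rV[R]_d))%:E < +oo)%E.

(* The Hilbert space H = L^2(R^d; rho0; R^d), represented by its elements
   (Borel maps R^d -> R^d that are rho0-square-integrable); equality in H is
   rho0-a.e. equality, i.e. distance 0 for the norm below. *)
Definition inH (R : realType) (d : nat) (rho0 : probability (BRd R d) R)
  (xi : BRd R d -> BRd R d) : Prop :=
  measurable_fun setT xi /\ (\int[rho0]_x (sqnRd (xi x : 'rV[R]_d))%:E < +oo)%E.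

Definition ipH (R : realType) (d : nat) (rho0 : probability (BRd R d) R)
  (xi eta : BRd R d -> BRd R d) : R :=
  fine (\int[rho0]_x (dotRd (xi x : 'rV[R]_d) (eta x))%:E)%E.

Definition normH (R : realType) (d : nat) (rho0 : probability (BRd R d) R)
  (xi : BRd R d -> BRd R d) : R :=
  Num.sqrt (fine (\int[rho0]_x (sqnRd (xi x : 'rV[R]_d))%:E)%E).

Definition addH (R : realType) (d : nat) (xi eta : BRd R d -> BRd R d)
  : BRd R d -> BRd R d := fun x => ((xi x : 'rV[R]_d) + eta x).
Definition subH (R : realType) (d : nat) (xi eta : BRd R d -> BRd R d)
  : BRd R d -> BRd R d := fun x => ((xi x : 'rV[R]_d) - eta x).
Definition scaleH (R : realType) (d : nat) (s : R) (xi : BRd R d -> BRd R d)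
  : BRd R d -> BRd R d := fun x => s *: (xi x : 'rV[R]_d).
Definition IdH (R : realType) (d : nat) : BRd R d -> BRd R d := fun x => x.

(* The lift phi#_{rho0}(xi) := phi(xi_# rho0).  phi is a function of the law
   (a set function on Borel sets of R^d); only its values on laws xi_# rho0,
   xi in H, i.e. on elements of P_2(R^d), ever matter. *)
Definition phi_lift (R : realType) (d : nat) (rho0 : probability (BRd R d) R)
  (phi : (set (BRd R d) -> \bar R) -> R) (xi : BRd R d -> BRd R d) : R :=
  phi (pushforward rho0 xi).

Definition frechet_gradient_on_H (R : realType) (d : nat)
  (rho0 : probability (BRd R d) R) (F : (BRd R d -> BRd R d) -> R)
  (G : (BRd R d -> BRd R d) -> (BRd R d -> BRd R d)) : Prop :=
  forall xi, inH rho0 xi ->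
    inH rho0 (G xi) /\
    forall eps : R, 0 < eps -> exists2 delta : R, 0 < delta &
      forall h, inH rho0 h -> normH rho0 h < delta ->
        `| F (addH xi h) - F xi - ipH rho0 (G xi) h | <= eps * normH rho0 h.

Definition lambda_convex_on_H (R : realType) (d : nat)
  (rho0 : probability (BRd R d) R) (lam : R)
  (F : (BRd R d -> BRd R d) -> R) : Prop :=
  forall xi eta, inH rho0 xi -> inH rho0 eta ->
  forall s : R, 0 <= s <= 1 ->
    F (addH (scaleH (1 - s) xi) (scaleH s eta))
      <= (1 - s) * F xi + s * F eta
         - lam / 2 * s * (1 - s) * normH rho0 (subH xi eta) ^+ 2.

Definition scheme_objective (R : realType) (d : nat)
  (rho0 : probability (BRd R d) R) (F : (BRd R d -> BRd R d) -> R)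
  (G : (BRd R d -> BRd R d) -> (BRd R d -> BRd R d)) (tau : R)
  (Xn xi : BRd R d -> BRd R d) : R :=
  1 / 2 * F xi + 1 / 2 * ipH rho0 (G Xn) xi
  + 1 / (2 * tau) * normH rho0 (subH xi Xn) ^+ 2.

(* Y is the unique (in H, i.e. up to rho0-a.e. equality) minimiser over H. *)
Definition unique_minimizer_H (R : realType) (d : nat)
  (rho0 : probability (BRd R d) R) (J : (BRd R d -> BRd R d) -> R)
  (Y : BRd R d -> BRd R d) : Prop :=
  inH rho0 Y /\ (forall xi, inH rho0 xi -> J Y <= J xi) /\
  (forall xi, inH rho0 xi -> J xi <= J Y -> normH rho0 (subH xi Y) = 0).

Definition interp (R : realType) (d : nat) (tau : R)
  (Xn : nat -> BRd R d -> BRd R d) (t : R) : BRd R d -> BRd R d :=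
  Xn (Num.truncn (t / tau)).

Definition loc_abs_cont_H (R : realType) (d : nat)
  (rho0 : probability (BRd R d) R) (X : R -> BRd R d -> BRd R d) : Prop :=
  forall T : R, 0 < T -> forall eps : R, 0 < eps ->
  exists2 delta : R, 0 < delta &
    forall (n : nat) (a b : nat -> R),
      (forall i, (i < n)%N -> 0 <= a i /\ a i <= b i /\ b i <= T) ->
      (forall i j, (i < n)%N -> (j < n)%N -> i <> j ->
          b i <= a j \/ b j <= a i) ->
      \sum_(i < n) (b i - a i) < delta ->
      \sum_(i < n) normH rho0 (subH (X (b i)) (X (a i))) < eps.

Definition time_deriv_H (R : realType) (d : nat)
  (rho0 : probability (BRd R d) R) (X : R -> BRd R d -> BRd R d) (t : R)
  (v : BRd R d -> BRd R d) : Prop :=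
  forall eps : R, 0 < eps -> exists2 delta : R, 0 < delta &
    forall h : R, 0 < `|h| < delta -> 0 <= t + h ->
      normH rho0 (subH (subH (X (t + h)) (X t)) (scaleH h v)) <= eps * `|h|.

From Pilot Require Import Defs.
From HB Require Import structures.
From mathcomp Require Import all_boot all_order all_algebra.
From mathcomp Require Import all_classical all_reals all_analysis.
From mathcomp Require Import ring lra.
From mathcomp Require Import measurable_realfun.
Import Order.TTheory GRing.Theory Num.Theory.
Import numFieldNormedType.Exports.
Local Open Scope classical_set_scope.
Local Open Scope ring_scope.

(* Every step of the scheme is a Crank-Nicolson step: the Euler-Lagrange
   equation of the minimisation reads
     X_{n+1} - X_n = - tau / 2 (grad phi(X_{n+1}) + grad phi(X_n)).
   The gradient of a lambda-convex Frechet-differentiable functional is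
   continuous, so near a time t > 0 the increment of the discrete solution
   over a window [a, b] containing t is - (b - a) grad phi(X(t)) up to
   o(b - a) + O(tau).  Locally uniform convergence of the interpolants carries
   this over to X, which is therefore differentiable with the right derivative
   at every t > 0.  Absolute continuity follows from the local Lipschitz
   bound, and X(0) = Id from X_0^tau -> Id. *)

(** * Borel measurability on R^d *)

Section BorelRd.
Context {R : realType} {d : nat}.
Local Notation V := (BRd R d).

Lemma measurable_coord (j : 'I_d) :
  measurable_fun setT (fun x : V => (x : 'rV[R]_d) ord0 j).
Proof.
apply: (@measurability _ _ V R setT _ _ (RGenOpens.measurableE R)).
move=> _ [_ [a [b ->]] <-].
rewrite setTI; apply: sub_sigma_algebra.
by apply: (continuousP _).1; [exact: coord_continuous | exact: interval_open].
Qed.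

Definition rat_box (c : 'rV[rat]_d) (r : rat) : set 'rV[R]_d :=
  [set z | forall j, ball (ratr (c ord0 j) : R) (ratr r) (z ord0 j)].

Lemma open_rat_box_cover {U : set 'rV[R]_d} : open U ->
  U = \bigcup_(i in [set i | rat_box i.1 i.2 `<=` U]) rat_box i.1 i.2.
Proof.
move=> oU; apply/seteqP; split => [x Ux|x [i /= + xi]]; last exact.
have /nbhs_ballP [e e0 He] : nbhs x U by apply: oU.
have [r /andP[]] : exists r : rat, (ratr r : R) \in `]0, e / 2[.
  by apply: rat_in_itvoo; rewrite divr_gt0.
rewrite !bnd_simp => r0 re.
have [c xc] : exists c : 'I_d -> rat, forall j,
    ball (ratr (c j) : R) (ratr r) (x ord0 j).
  apply: (fin_all_exists (P := fun j q => ball (ratr q : R) (ratr r) (x ord0 j))).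
  move=> j; have [q /andP[]] : exists q : rat,
      (ratr q : R) \in `]x ord0 j - ratr r, x ord0 j + ratr r[.
    by apply: rat_in_itvoo; rewrite ltrBlDr -addrA ltrDl addr_gt0.
  rewrite !bnd_simp => q1 q2; exists q.
  by rewrite -ball_normE /= ltr_norml; apply/andP; split; lra.
exists (\row_j c j, r); last by move=> j /=; rewrite mxE.
move=> z zc; apply: He; split => // i j; rewrite (ord1 i).
have := xc j; have := zc j; rewrite /= mxE -!ball_normE /=.
move=> h1 h2; rewrite (splitr e).
apply: le_lt_trans (ler_distD (ratr (c j)) _ _) _.
by rewrite distrC; apply: ltrD; apply: lt_trans re.
Qed.

Lemma measurable_fun_rV dT (T : measurableType dT) (f : T -> V) :
  (forall j, measurable_fun setT (fun x => (f x : 'rV[R]_d) ord0 j)) ->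
  measurable_fun setT f.
Proof.
move=> mf; apply: (@measurability _ _ T V setT f (@open 'rV[R]_d) erefl).
move=> _ [U oU <-]; rewrite setTI (open_rat_box_cover oU) preimage_bigcup.
rewrite bigcup_mkcond; apply: countable_bigcupT_measurable => [|[c r]].
  exact: countableP.
case: ifP => _; last exact: measurable0.
have -> : f @^-1` rat_box c r = \bigcap_(j in [set: 'I_d])
    ((fun x => (f x : 'rV[R]_d) ord0 j) @^-1` ball (ratr (c ord0 j) : R) (ratr r)).
  by apply/seteqP; split => x /= h; [move=> j _; exact: h | move=> j; exact: h].
apply: fin_bigcap_measurable => [|j _]; first exact: finite_finset.
rewrite -[X in measurable X]setTI; apply: (mf j measurableT).
exact: open_measurable (ball_open _ _).
Qed.

Lemma measurable_fun_coord dT (T : measurableType dT) (f : T -> V) j :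
  measurable_fun setT f -> measurable_fun setT (fun x => (f x : 'rV[R]_d) ord0 j).
Proof. by move=> mf; exact: measurableT_comp (measurable_coord j) mf. Qed.

End BorelRd.

(** * The Hilbert space H = L^2(rho0; R^d) *)

Section DotRd.
Context {R : realType} {d : nat}.
Implicit Types (u v w : 'rV[R]_d) (s : R).

Lemma dotRdC u v : dotRd u v = dotRd v u.
Proof. by apply: eq_bigr => i _; rewrite mulrC. Qed.

Lemma dotRdDl u v w : dotRd (u + v) w = dotRd u w + dotRd v w.
Proof. by rewrite /dotRd -big_split; apply: eq_bigr => i _; rewrite mxE mulrDl. Qed.

Lemma dotRdZl s u w : dotRd (s *: u) w = s * dotRd u w.
Proof. by rewrite /dotRd mulr_sumr; apply: eq_bigr => i _; rewrite mxE mulrA. Qed.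

Lemma sqnRd_ge0 u : 0 <= sqnRd u.
Proof. by apply: sumr_ge0 => i _; rewrite -expr2 sqr_ge0. Qed.

Lemma sqnRdZ s u : sqnRd (s *: u) = s ^+ 2 * sqnRd u.
Proof. by rewrite /sqnRd dotRdZl dotRdC dotRdZl mulrA expr2. Qed.

Lemma ler_norm_dotRd u v : 2 * `|dotRd u v| <= sqnRd u + sqnRd v.
Proof.
rewrite /sqnRd /dotRd -big_split /=.
apply: le_trans (_ : 2 * \sum_(i < d) `|u ord0 i * v ord0 i| <= _).
  by rewrite ler_pM2l // ler_norm_sum.
rewrite mulr_sumr; apply: ler_sum => i _.
have := sqr_ge0 (`|u ord0 i| - `|v ord0 i|).
rewrite normrM -[u _ _ * u _ _]expr2 -[v _ _ * v _ _]expr2.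
rewrite -(real_normK (num_real (u ord0 i))) -(real_normK (num_real (v ord0 i))).
by rewrite !expr2; nra.
Qed.

Lemma sqnRdD_le u v : sqnRd (u + v) <= 2 * sqnRd u + 2 * sqnRd v.
Proof.
rewrite /sqnRd dotRdDl !(dotRdC _ (u + v)) !dotRdDl (dotRdC v u).
have := ler_norm_dotRd u v; have := ler_norm (dotRd u v); rewrite /sqnRd; lra.
Qed.

End DotRd.

Section L2.
Context {R : realType} {d : nat} {rho0 : probability (BRd R d) R}.
Local Notation V := (BRd R d).
Local Notation inH := (inH rho0).
Local Notation ipH := (ipH rho0).
Local Notation normH := (normH rho0).
Implicit Types (a b c : V -> V) (s : R).

Lemma measurable_dotRd {a b : V -> V} : measurable_fun setT a -> measurable_fun setT b ->
  measurable_fun setT (fun x => dotRd (a x : 'rV[R]_d) (b x)).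
Proof.
move=> ma mb; apply: measurable_sum => i.
by apply: measurable_funM; apply: measurable_fun_coord.
Qed.

Lemma integrable_ge0_lty {f : V -> R} :
  measurable_fun setT f -> (forall x, 0 <= f x) ->
  rho0.-integrable setT (EFin \o f) <-> (\int[rho0]_x (f x)%:E < +oo)%E.
Proof.
move=> mf f0; have eqf : (\int[rho0]_x `|(EFin \o f) x| = \int[rho0]_x (f x)%:E)%E.
  by apply: eq_integral => x _; rewrite /comp abse_EFin ger0_norm.
split => [/integrableP[_]|fty]; first by rewrite eqf.
by apply/integrableP; split; [exact/measurable_EFinP | rewrite eqf].
Qed.

Lemma inH_measurable a : inH a -> measurable_fun setT a.
Proof. by case. Qed.

Lemma measurable_addH a b : measurable_fun setT a -> measurable_fun setT b ->
  measurable_fun setT (addH a b).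
Proof.
move=> ma mb; apply: measurable_fun_rV => j; under eq_fun do rewrite mxE.
by apply: measurable_funD; apply: measurable_fun_coord.
Qed.

Lemma measurable_scaleH s a : measurable_fun setT a -> measurable_fun setT (scaleH s a).
Proof.
move=> ma; apply: measurable_fun_rV => j; under eq_fun do rewrite mxE.
by apply: measurable_funM => //; apply: measurable_fun_coord.
Qed.

Lemma integrable_sqnRd {a : V -> V} :
  inH a -> rho0.-integrable setT (EFin \o (fun x => sqnRd (a x : 'rV[R]_d))).
Proof.
move=> [ma afin]; apply/integrable_ge0_lty => // [|x]; last exact: sqnRd_ge0.
exact: measurable_dotRd.
Qed.

Lemma inH_of_sqnRd_le {a : V -> V} (g : V -> R) : measurable_fun setT a ->
  rho0.-integrable setT (EFin \o g) ->
  (forall x, sqnRd (a x : 'rV[R]_d) <= g x) -> inH a.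
Proof.
move=> ma gint ag; split => //.
have aint : rho0.-integrable setT (EFin \o (fun x => sqnRd (a x : 'rV[R]_d))).
  apply: le_integrable gint => //.
    by apply/measurable_EFinP; exact: measurable_dotRd.
  move=> x _; rewrite /= lee_fin ger0_norm ?sqnRd_ge0 //.
  exact: le_trans (ag x) (ler_norm _).
exact: (integrable_ge0_lty (measurable_dotRd ma ma) (fun x => sqnRd_ge0 (a x))).1 aint.
Qed.

Lemma integrable_dotRd {a b : V -> V} : inH a -> inH b ->
  rho0.-integrable setT (EFin \o (fun x => dotRd (a x : 'rV[R]_d) (b x))).
Proof.
move=> ha hb.
have := integrableD measurableT (integrable_sqnRd ha) (integrable_sqnRd hb).
apply: le_integrable => //.
  by apply/measurable_EFinP; apply: measurable_dotRd; apply: inH_measurable.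
move=> x _; rewrite /= lee_fin (ger0_norm (addr_ge0 (sqnRd_ge0 _) (sqnRd_ge0 _))).
by have := ler_norm_dotRd (a x) (b x); have := normr_ge0 (dotRd (a x) (b x)); lra.
Qed.

Lemma inH_add {a b : V -> V} : inH a -> inH b -> inH (addH a b).
Proof.
move=> ha hb; apply: (inH_of_sqnRd_le (fun x =>
    2 * sqnRd (a x : 'rV[R]_d) + 2 * sqnRd (b x : 'rV[R]_d))).
- by apply: measurable_addH; apply: inH_measurable.
- exact: integrableD (integrableZl _ _ (integrable_sqnRd ha))
                     (integrableZl _ _ (integrable_sqnRd hb)).
- by move=> x; exact: sqnRdD_le.
Qed.

Lemma inH_scale s {a : V -> V} : inH a -> inH (scaleH s a).
Proof.
move=> ha; apply: (inH_of_sqnRd_le (fun x => s ^+ 2 * sqnRd (a x : 'rV[R]_d))).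
- by apply: measurable_scaleH; apply: inH_measurable.
- exact: integrableZl (integrable_sqnRd ha).
- by move=> x; rewrite /scaleH sqnRdZ.
Qed.

Lemma subHE a b : subH a b = addH a (scaleH (-1) b).
Proof. by apply/funext => x; rewrite /subH /addH /scaleH scaleN1r. Qed.

Lemma inH_sub {a b : V -> V} : inH a -> inH b -> inH (subH a b).
Proof. by move=> ha hb; rewrite subHE; apply: inH_add => //; apply: inH_scale. Qed.

Lemma ipHDl a b c : inH a -> inH b -> inH c -> ipH (addH a b) c = ipH a c + ipH b c.
Proof.
move=> ha hb hc; rewrite /Defs.ipH.
under eq_integral do rewrite /addH dotRdDl EFinD.
rewrite integralD //; try exact: integrable_dotRd.
by rewrite fineD //; apply: integrable_fin_num => //; exact: integrable_dotRd.
Qed.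

Lemma ipHZl s a c : inH a -> inH c -> ipH (scaleH s a) c = s * ipH a c.
Proof.
move=> ha hc; rewrite /Defs.ipH.
under eq_integral do rewrite /scaleH dotRdZl EFinM.
rewrite integralZl //; last exact: integrable_dotRd.
by rewrite fineM //; apply: integrable_fin_num => //; exact: integrable_dotRd.
Qed.

Lemma ipHC a b : ipH a b = ipH b a.
Proof. by rewrite /Defs.ipH; congr fine; apply: eq_integral => x _; rewrite dotRdC. Qed.

Lemma ipH_ge0 a : 0 <= ipH a a.
Proof. by apply: fine_ge0; apply: integral_ge0 => x _; rewrite lee_fin sqnRd_ge0. Qed.

End L2.

Ltac pointwise_ring := apply/funext => ?; apply/matrixP => ? ?;
  rewrite /addH /subH /scaleH /IdH ?mxE; ring.

Lemma sqr_le_of_quadratic_ge0 (R : realFieldType) (A B C : R) : 0 <= C ->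
  (forall t, 0 <= A + 2 * t * B + t ^+ 2 * C) -> B ^+ 2 <= A * C.
Proof.
rewrite le_eqVlt => /orP[/eqP<- H|C0 H].
  have [->|B0] := eqVneq B 0; first by rewrite expr0n mulr0.
  have := H (- (`|A| + 1) / B / 2).
  have -> : 2 * (- (`|A| + 1) / B / 2) * B = - (`|A| + 1) by field.
  by have := ler_norm A; lra.
have := H (- (B / C)); have : B = B / C * C by rewrite divfK ?gt_eqF.
by set u := B / C => ->; nra.
Qed.

Section HilbertH.
Context {R : realType} {d : nat} {rho0 : probability (BRd R d) R}.
Local Notation V := (BRd R d).
Local Notation inH := (inH rho0).
Local Notation ipH := (ipH rho0).
Local Notation normH := (normH rho0).
Implicit Types (a b c h : V -> V) (s : R).

Lemma ipHDr a b c : inH a -> inH b -> inH c -> ipH c (addH a b) = ipH c a + ipH c b.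
Proof. by move=> *; rewrite ipHC ipHDl // !(ipHC _ c). Qed.

Lemma ipHZr s a c : inH a -> inH c -> ipH c (scaleH s a) = s * ipH c a.
Proof. by move=> *; rewrite ipHC ipHZl // ipHC. Qed.

Lemma ipHBl a b c : inH a -> inH b -> inH c -> ipH (subH a b) c = ipH a c - ipH b c.
Proof.
by move=> ha hb hc; rewrite subHE ipHDl ?ipHZl ?mulN1r //; apply: inH_scale.
Qed.

Lemma normH_ge0 a : 0 <= normH a.
Proof. exact: sqrtr_ge0. Qed.

Lemma normH_sqr a : normH a ^+ 2 = ipH a a.
Proof. by rewrite sqr_sqrtr // ipH_ge0. Qed.

Lemma ipH_addZ s a h : inH a -> inH h ->
  ipH (addH a (scaleH s h)) (addH a (scaleH s h)) =
  ipH a a + 2 * s * ipH a h + s ^+ 2 * ipH h h.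
Proof.
move=> ha hh; have hs := inH_scale s hh.
rewrite ipHDl ?ipHDr ?ipHZl ?ipHZr ?(ipHC h a) //; first ring.
exact: inH_add.
Qed.

Lemma ler_norm_ipH {a b} : inH a -> inH b -> `|ipH a b| <= normH a * normH b.
Proof.
move=> ha hb; rewrite -ler_sqr ?nnegrE ?mulr_ge0 ?normH_ge0 //.
rewrite real_normK ?num_real // exprMn !normH_sqr.
by apply: sqr_le_of_quadratic_ge0 => [|t]; first exact: ipH_ge0; rewrite -ipH_addZ // ipH_ge0.
Qed.

Lemma normH_add_le {a b} : inH a -> inH b -> normH (addH a b) <= normH a + normH b.
Proof.
move=> ha hb; rewrite -ler_sqr ?nnegrE ?addr_ge0 ?normH_ge0 //.
have -> : addH a b = addH a (scaleH 1 b) by pointwise_ring.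
rewrite normH_sqr ipH_addZ // -!normH_sqr.
by have := ler_norm_ipH ha hb; have := ler_norm (ipH a b); nra.
Qed.

Lemma normHZ s a : inH a -> normH (scaleH s a) = `|s| * normH a.
Proof.
move=> ha; rewrite /Defs.normH -/(Defs.ipH _ _ _) -/(Defs.ipH _ _ _).
rewrite ipHZl ?ipHZr //; last exact: inH_scale.
by rewrite mulrA -expr2 sqrtrM ?sqr_ge0 // sqrtr_sqr.
Qed.

Lemma normH_subC a b : inH a -> inH b -> normH (subH a b) = normH (subH b a).
Proof.
move=> ha hb; have -> : subH b a = scaleH (-1) (subH a b) by pointwise_ring.
by rewrite normHZ ?normrN1 ?mul1r //; exact: inH_sub.
Qed.

Lemma normH_sub_le {a b c} : inH a -> inH b -> inH c ->
  normH (subH a c) <= normH (subH a b) + normH (subH b c).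
Proof.
move=> ha hb hc; have -> : subH a c = addH (subH a b) (subH b c) by pointwise_ring.
by apply: normH_add_le; apply: inH_sub.
Qed.

Lemma normH_increment_le s {x y x' y' g} : inH x -> inH y -> inH x' -> inH y' ->
  inH g -> normH (addH (subH y x) (scaleH s g)) <=
  normH (subH y y') + normH (addH (subH y' x') (scaleH s g)) + normH (subH x' x).
Proof.
move=> hx hy hx' hy' hg.
have hmid : inH (addH (subH y' x') (scaleH s g)).
  by apply: inH_add; [exact: inH_sub | exact: inH_scale].
have -> : addH (subH y x) (scaleH s g) =
  addH (addH (subH y y') (addH (subH y' x') (scaleH s g))) (subH x' x) by pointwise_ring.
apply: le_trans (normH_add_le (inH_add (inH_sub hy hy') hmid) (inH_sub hx' hx)) _.
by rewrite lerD2r normH_add_le //; exact: inH_sub.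
Qed.

End HilbertH.

(** * Gradients of lambda-convex functionals *)

Lemma ler_of_vanishing_defect (R : realFieldType) {x y : R} (K : R) :
  (forall eps, 0 < eps -> exists2 del, 0 < del &
     forall s, 0 < s -> s < del -> x <= y + eps + s * K) -> x <= y.
Proof.
move=> H; apply/ler_addgt0Pr => th th0.
have [del del0 Hdel] := H (th / 2) (divr_gt0 th0 (ltr0Sn _ 1)).
have K1 : 0 < `|K| + 1 by rewrite ltr_pwDr ?normr_ge0.
pose s := Num.min (del / 2) (th / (2 * (`|K| + 1))).
have s0 : 0 < s by rewrite lt_min !divr_gt0 ?mulr_gt0.
have sdel : s < del by apply: le_lt_trans (_ : del / 2 < del); rewrite ?/s ?ge_min ?lexx //; lra.
have sK : s * (`|K| + 1) <= th / 2.
  have -> : th / 2 = th / (2 * (`|K| + 1)) * (`|K| + 1) by field; lra.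
  by rewrite ler_pM2r // /s ge_min lexx orbT.
have := Hdel s s0 sdel; have := ler_norm K; nra.
Qed.

Section ConvexGradient.
Context {R : realType} {d : nat} {rho0 : probability (BRd R d) R}.
Local Notation V := (BRd R d).
Local Notation inH := (inH rho0).
Local Notation ipH := (ipH rho0).
Local Notation normH := (normH rho0).
Context {F : (V -> V) -> R} {G : (V -> V) -> V -> V} {lam : R}.
Hypothesis hF : frechet_gradient_on_H rho0 F G.
Hypothesis hC : lambda_convex_on_H rho0 lam F.

Lemma lambda_convex_subgradient {xi eta} : inH xi -> inH eta ->
  F xi + ipH (G xi) (subH eta xi) + lam / 2 * normH (subH eta xi) ^+ 2 <= F eta.
Proof.
move=> hxi heta; have hu : inH (subH eta xi) by apply: inH_sub.
set u := subH eta xi in hu *; set e := normH u.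
have e0 : 0 <= e by apply: normH_ge0.
rewrite -addrA -lerBrDl.
apply: (@ler_of_vanishing_defect R _ _ (lam / 2 * e ^+ 2)) => eps eps0.
have e1 : 0 < e + 1 by lra.
have [hGxi /(_ (eps / (e + 1)) (divr_gt0 eps0 e1))[del del0 Hdel]] := hF xi hxi.
exists (Num.min 1 (del / (e + 1))) => [|s s0]; first by rewrite lt_min ltr01 divr_gt0.
rewrite lt_min ltr_pdivlMr // => /andP[s1 sdel].
have hsu : inH (scaleH s u) by apply: inH_scale.
have nsu : normH (scaleH s u) = s * e by rewrite normHZ // gtr0_norm.
have hc := hC xi eta hxi heta s ltac:(apply/andP; split; lra).
rewrite (_ : addH _ _ = addH xi (scaleH s u)) in hc; last by rewrite /u; pointwise_ring.
rewrite normH_subC // -/u -/e in hc.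
have := Hdel _ hsu ltac:(rewrite nsu; nra).
rewrite nsu ipHZr // => /ler_normlP[hd _].
have eps_e : eps / (e + 1) * e <= eps by rewrite mulrAC ler_pdivrMr //; nra.
have key : s * (ipH (G xi) u + lam / 2 * e ^+ 2)
    <= s * (F eta - F xi + eps + s * (lam / 2 * e ^+ 2)).
  by rewrite !mulrDr; nra.
by rewrite ler_pM2l in key.
Qed.

Lemma gradient_increment_le {xi eta h} : inH xi -> inH eta -> inH h ->
  ipH (subH (G eta) (G xi)) h <=
    (F (addH xi h) - F xi - ipH (G xi) h)
    + ipH (subH (G eta) (G xi)) (subH eta xi)
    + `|lam| / 2 * (normH (subH eta xi) ^+ 2 + normH (subH (addH xi h) eta) ^+ 2).
Proof.
move=> hxi heta hh; have hGx := (hF xi hxi).1; have hGe := (hF eta heta).1.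
have hxh : inH (addH xi h) by apply: inH_add.
have hu : inH (subH eta xi) by apply: inH_sub.
have h1 := lambda_convex_subgradient hxi heta.
have h2 := lambda_convex_subgradient heta hxh.
have e : subH (addH xi h) eta = addH h (scaleH (-1) (subH eta xi)) by pointwise_ring.
rewrite e; rewrite e in h2.
have hsu := inH_scale (-1) hu.
rewrite (ipHDr h (scaleH (-1) (subH eta xi)) (G eta)) // in h2.
rewrite (ipHZr (-1) (subH eta xi) (G eta)) // in h2.
rewrite !ipHBl //.
have := sqr_ge0 (normH (subH eta xi)); have := sqr_ge0 (normH (addH h (scaleH (-1) (subH eta xi)))).
have : - lam <= `|lam| by rewrite -normrN ler_norm.
nra.
Qed.

Lemma lambda_convex_gradient_continuous {xi} : inH xi ->
  forall eps, 0 < eps -> exists2 rho, 0 < rho & forall eta, inH eta ->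
    normH (subH eta xi) < rho -> normH (subH (G eta) (G xi)) <= eps.
Proof.
(* Test [gradient_increment_le] with an [h] of length [r] pointing along
   [G eta - G xi], [eta] being within [r / 2] of [xi]. *)
move=> hxi eps eps0; have l0 : 0 < 5 * `|lam| + 1 by rewrite ltr_pwDr ?mulr_ge0.
have [hGx /(_ (eps / 4) (divr_gt0 eps0 (ltr0Sn _ 3)))[del del0 Hdel]] := hF xi hxi.
pose r := Num.min (del / 2) (eps / (5 * `|lam| + 1)).
have r0 : 0 < r by rewrite lt_min !divr_gt0.
have rdel : r < del by apply: le_lt_trans (_ : del / 2 < del); rewrite ?/r ?ge_min ?lexx //; lra.
have rlam : r * (5 * `|lam| + 1) <= eps by rewrite -ler_pdivlMr // /r ge_min lexx orbT.
exists (r / 2) => [|eta heta he]; first by rewrite divr_gt0.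
have hv : inH (subH (G eta) (G xi)) by apply: inH_sub => //; exact: (hF eta heta).1.
have hu : inH (subH eta xi) by apply: inH_sub.
set v := subH (G eta) (G xi) in hv *; set u := subH eta xi in hu he.
set Vn := normH v; set e := normH u in he.
have [->|Vn0] := eqVneq Vn 0; first exact: ltW.
have Vn_gt0 : 0 < Vn by rewrite lt_def Vn0 normH_ge0.
have hh : inH (scaleH (r / Vn) v) by apply: inH_scale.
have nh : normH (scaleH (r / Vn) v) = r.
  by rewrite normHZ // gtr0_norm ?divr_gt0 // divfK.
have ipvh : ipH v (scaleH (r / Vn) v) = r * Vn.
  by rewrite ipHZr // -normH_sqr -/Vn expr2 mulrA divfK.
have := gradient_increment_le hxi heta hh; rewrite -/v -/u -/e ipvh.
have /ler_normlP[_ hfr] := Hdel _ hh ltac:(by rewrite nh).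
rewrite nh in hfr.
have ipvu : ipH v u <= Vn * e by exact: le_trans (ler_norm _) (ler_norm_ipH hv hu).
have : normH (subH (addH xi (scaleH (r / Vn) v)) eta) <= r + e.
  have -> : subH (addH xi (scaleH (r / Vn) v)) eta =
      addH (scaleH (r / Vn) v) (scaleH (-1) u) by rewrite /u; pointwise_ring.
  apply: le_trans (normH_add_le hh (inH_scale (-1) hu)) _.
  by rewrite nh normHZ // normrN1 mul1r.
set m := normH (subH _ _) => hm hincr.
have e0 : 0 <= e := normH_ge0 u; have m0 : 0 <= m := normH_ge0 _.
have sq : e ^+ 2 + m ^+ 2 <= 5 / 2 * r ^+ 2 by nra.
have lam0 := normr_ge0 lam.
have : r * Vn / 2 <= eps / 4 * r + 5 / 4 * `|lam| * r ^+ 2 by nra.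
have : r * (Vn - eps) <= 0 by nra.
by rewrite pmulr_rle0 // subr_le0.
Qed.

Lemma scheme_objective_addZ tau Xn Y w s : 0 < tau ->
  inH Xn -> inH Y -> inH w ->
  scheme_objective rho0 F G tau Xn (addH Y (scaleH s w))
    - scheme_objective rho0 F G tau Xn Y =
  1 / 2 * (F (addH Y (scaleH s w)) - F Y - s * ipH (G Y) w)
  + s / 2 * ipH (addH (addH (G Y) (G Xn)) (scaleH (2 / tau) (subH Y Xn))) w
  + s ^+ 2 / (2 * tau) * normH w ^+ 2.
Proof.
move=> tau0 hXn hY hw; have hGY := (hF Y hY).1; have hGX := (hF Xn hXn).1.
have hD : inH (subH Y Xn) by apply: inH_sub.
have hsw := inH_scale s hw; have hGG := inH_add hGY hGX.
have hsD := inH_scale (2 / tau) hD.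
rewrite /scheme_objective.
(* [subH a b] unfolds to an [addH], so [ipHDl] is given explicit arguments. *)
have -> : subH (addH Y (scaleH s w)) Xn = addH (subH Y Xn) (scaleH s w) by pointwise_ring.
rewrite !normH_sqr (ipH_addZ s (subH Y Xn) w) //.
rewrite (ipHDr Y (scaleH s w) (G Xn)) // ipHZr //.
rewrite (ipHDl (addH (G Y) (G Xn)) (scaleH (2 / tau) (subH Y Xn)) w) //.
rewrite (ipHDl (G Y) (G Xn) w) // (ipHZl (2 / tau) (subH Y Xn) w) //.
by field; rewrite gt_eqF.
Qed.

Lemma scheme_Euler_Lagrange {tau Xn Y} : 0 < tau -> inH Xn ->
  unique_minimizer_H rho0 (scheme_objective rho0 F G tau Xn) Y ->
  normH (addH (subH Y Xn) (scaleH (tau / 2) (addH (G Y) (G Xn)))) = 0.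
Proof.
(* [w] below is twice the gradient of the objective at [Y]; minimality of [Y] in the
   direction [- w] forces it to vanish. *)
move=> tau0 hXn [hY [Ymin _]].
have [hGY /= frY] := hF Y hY; have hGX := (hF Xn hXn).1.
pose w := addH (addH (G Y) (G Xn)) (scaleH (2 / tau) (subH Y Xn)).
have hw : inH w by apply: inH_add; [apply: inH_add | apply: inH_scale; apply: inH_sub].
have -> : addH (subH Y Xn) (scaleH (tau / 2) (addH (G Y) (G Xn))) = scaleH (tau / 2) w.
  apply/funext => x; apply/matrixP => i j.
  by rewrite /w /addH /subH /scaleH !mxE; field; rewrite gt_eqF.
suff w0 : normH w ^+ 2 <= 0.
  by rewrite normHZ // (eqP (_ : normH w == 0)) ?mulr0 // -sqrf_eq0 eq_le w0 sqr_ge0.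
set N := normH w.
apply: (@ler_of_vanishing_defect R _ _ (N ^+ 2 / tau)) => eps eps0.
have N0 : 0 <= N := normH_ge0 w.
have N1 : 0 < N + 1 by lra.
have [del del0 Hdel] := frY (eps / (N + 1)) (divr_gt0 eps0 N1).
exists (del / (N + 1)) => [|s s0]; first exact: divr_gt0.
rewrite ltr_pdivlMr // => sdel.
have hsw : inH (scaleH (- s) w) by apply: inH_scale.
have nsw : normH (scaleH (- s) w) = s * N by rewrite normHZ // normrN gtr0_norm.
have := Hdel _ hsw ltac:(rewrite nsw; nra).
rewrite nsw ipHZr // => /ler_normlP[_ defect].
have := Ymin _ (inH_add hY hsw); rewrite -subr_ge0 scheme_objective_addZ //.
have epsN : eps / (N + 1) * (s * N) <= s * eps.
  by rewrite mulrCA ler_pM2l // mulrAC ler_pdivrMr //; nra.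
rewrite [ipH (addH _ _) w](_ : _ = N ^+ 2); last by rewrite normH_sqr.
rewrite -/N => hmin.
have key : s * N ^+ 2 <= s * (eps + s * (N ^+ 2 / tau)).
  have -> : s * (eps + s * (N ^+ 2 / tau)) = s * eps + 2 * ((- s) ^+ 2 / (2 * tau) * N ^+ 2).
    by field; rewrite gt_eqF.
  lra.
by rewrite add0r; rewrite ler_pM2l in key.
Qed.

End ConvexGradient.

(** * The scheme and its limit *)

Lemma truncn_divr_itv {R : realType} {T x : R} : 0 < T -> 0 <= x ->
  (Num.truncn (x / T))%:R * T <= x < (Num.truncn (x / T))%:R * T + T.
Proof.
move=> T0 x0; have /andP[] := truncn_itv (divr_ge0 x0 (ltW T0)).
by rewrite ler_pdivlMr // ltr_pdivrMr // -natr1 mulrDl mul1r => -> ->.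
Qed.

Lemma interp_nat {R : realType} {d : nat} {tau : R} (Xn : nat -> BRd R d -> BRd R d) n :
  0 < tau -> interp tau Xn (n%:R * tau) = Xn n.
Proof. by move=> tau0; rewrite /interp mulfK ?gt_eqF // natrK. Qed.

Section SchemeSteps.
Context {R : realType} {d : nat} {rho0 : probability (BRd R d) R}.
Local Notation V := (BRd R d).
Local Notation inH := (inH rho0).
Local Notation normH := (normH rho0).
Context {F : (V -> V) -> R} {G : (V -> V) -> V -> V} {tau : R} {Xn : nat -> V -> V}.
Hypothesis hF : frechet_gradient_on_H rho0 F G.
Hypothesis tau0 : 0 < tau.
Hypothesis hX0 : inH (Xn 0%N).
Hypothesis hmin : forall n, unique_minimizer_H rho0
  (scheme_objective rho0 F G tau (Xn n)) (Xn n.+1).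

Lemma scheme_inH n : inH (Xn n).
Proof. by case: n => [|n] //; case: (hmin n). Qed.

Lemma scheme_step_le n {g eps} : inH g ->
  normH (subH (G (Xn n.+1)) g) <= eps -> normH (subH (G (Xn n)) g) <= eps ->
  normH (addH (subH (Xn n.+1) (Xn n)) (scaleH tau g)) <= tau * eps.
Proof.
move=> hg h1 h0; have hX1 := scheme_inH n.+1; have hX := scheme_inH n.
have hG1 := (hF _ hX1).1; have hG0 := (hF _ hX).1.
have hEL : inH (addH (subH (Xn n.+1) (Xn n))
    (scaleH (tau / 2) (addH (G (Xn n.+1)) (G (Xn n))))).
  by apply: inH_add; [exact: inH_sub | apply: inH_scale; exact: inH_add].
have hdev : inH (addH (subH (G (Xn n.+1)) g) (subH (G (Xn n)) g)).
  by apply: inH_add; exact: inH_sub.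
have -> : addH (subH (Xn n.+1) (Xn n)) (scaleH tau g) =
    addH (addH (subH (Xn n.+1) (Xn n))
               (scaleH (tau / 2) (addH (G (Xn n.+1)) (G (Xn n)))))
         (scaleH (- (tau / 2)) (addH (subH (G (Xn n.+1)) g) (subH (G (Xn n)) g))).
  by apply/funext => x; apply/matrixP => i j; rewrite /addH /subH /scaleH !mxE; field.
apply: le_trans (normH_add_le hEL (inH_scale _ hdev)) _.
rewrite (scheme_Euler_Lagrange hF tau0 hX (hmin n)) add0r normHZ //.
rewrite normrN gtr0_norm ?divr_gt0 //.
have hdev_le := le_trans (normH_add_le (inH_sub hG1 hg) (inH_sub hG0 hg)) (lerD h1 h0).
apply: le_trans (ler_wpM2l (ltW (divr_gt0 tau0 (ltr0Sn _ 1))) hdev_le) _.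
by rewrite le_eqVlt; apply/orP; left; apply/eqP; field.
Qed.

Lemma scheme_increment_le {g eps m j} : inH g ->
  (forall n, (m <= n <= m + j)%N -> normH (subH (G (Xn n)) g) <= eps) ->
  normH (addH (subH (Xn (m + j)) (Xn m)) (scaleH (j%:R * tau) g)) <= j%:R * tau * eps.
Proof.
move=> hg; elim: j => [|j IH] Gnear.
  have -> : addH (subH (Xn (m + 0)) (Xn m)) (scaleH (0%:R * tau) g) = scaleH 0 g.
    by rewrite addn0; pointwise_ring.
  by rewrite normHZ // normr0 !mul0r.
have hXm := scheme_inH m; have hXj := scheme_inH (m + j).
have hXj1 := scheme_inH (m + j).+1.
have -> : addH (subH (Xn (m + j.+1)) (Xn m)) (scaleH (j.+1%:R * tau) g) =
  addH (addH (subH (Xn (m + j)) (Xn m)) (scaleH (j%:R * tau) g))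
       (addH (subH (Xn (m + j).+1) (Xn (m + j))) (scaleH tau g)).
  by rewrite addnS -natr1; pointwise_ring.
apply: le_trans (normH_add_le _ _) _; try by apply: inH_add;
  [exact: inH_sub | exact: inH_scale].
have le_j : forall n, (m <= n <= m + j)%N -> (m <= n <= m + j.+1)%N.
  by move=> n /andP[-> h]; rewrite addnS ltnW.
have h1 := IH (fun n hn => Gnear n (le_j n hn)).
have h2 := scheme_step_le (m + j) hg (Gnear _ _) (Gnear _ _).
rewrite -natr1 mulrDl mul1r mulrDl; apply: lerD => //; apply: h2.
  by rewrite addnS leqnn andbT leqW ?leq_addr.
by rewrite leq_addr addnS leqnSn.
Qed.

Lemma interp_increment_le {a b g eps} : inH g -> 0 <= eps -> 0 <= a -> a <= b ->
  (forall n, (Num.truncn (a / tau) <= n <= Num.truncn (b / tau))%N ->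
     normH (subH (G (Xn n)) g) <= eps) ->
  normH (addH (subH (interp tau Xn b) (interp tau Xn a)) (scaleH (b - a) g))
    <= (b - a + tau) * eps + tau * normH g.
Proof.
move=> hg eps0 a0 ab Gnear; rewrite /interp.
have /andP[ma1 ma2] := truncn_divr_itv tau0 a0.
have /andP[Mb1 Mb2] := truncn_divr_itv tau0 (le_trans a0 ab).
set m := Num.truncn (a / tau) in Gnear ma1 ma2 *.
set M := Num.truncn (b / tau) in Gnear Mb1 Mb2 *.
have mM : (m <= M)%N by apply: le_truncn; rewrite ler_pM2r ?invr_gt0.
move: Gnear; rewrite -(subnKC mM); set j := (M - m)%N => Gnear.
have jtau : j%:R * tau = M%:R * tau - m%:R * tau by rewrite natrB // mulrBl.
have -> : addH (subH (Xn (m + j)) (Xn m)) (scaleH (b - a) g) =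
  addH (addH (subH (Xn (m + j)) (Xn m)) (scaleH (j%:R * tau) g))
       (scaleH (b - a - j%:R * tau) g) by pointwise_ring.
have hZ : inH (addH (subH (Xn (m + j)) (Xn m)) (scaleH (j%:R * tau) g)).
  by apply: inH_add; [apply: inH_sub; exact: scheme_inH | exact: inH_scale].
apply: le_trans (normH_add_le hZ (inH_scale _ hg)) _.
rewrite normHZ //; apply: lerD.
  apply: le_trans (scheme_increment_le hg Gnear) _.
  by rewrite ler_wpM2r // jtau; lra.
rewrite ler_wpM2r ?normH_ge0 //; apply/ler_normlP; split; lra.
Qed.

End SchemeSteps.

Section SchemeLimit.
Context {R : realType} {d : nat} {rho0 : probability (BRd R d) R}.
Local Notation V := (BRd R d).
Local Notation inH := (inH rho0).
Local Notation normH := (normH rho0).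
Context {F : (V -> V) -> R} {G : (V -> V) -> V -> V} {lam : R}.
Context {tau : nat -> R} {Xs : nat -> nat -> V -> V} {X : R -> V -> V}.
Hypothesis hF : frechet_gradient_on_H rho0 F G.
Hypothesis hC : lambda_convex_on_H rho0 lam F.
Hypothesis htau : forall k, 0 < tau k.
Hypothesis htau0 : tau @ \oo --> (0 : R).
Hypothesis hX0 : forall k, inH (Xs k 0%N).
Hypothesis hmin : forall k n,
  unique_minimizer_H rho0 (scheme_objective rho0 F G (tau k) (Xs k n)) (Xs k n.+1).
Hypothesis hXt : forall t, 0 <= t -> inH (X t).

Lemma scheme_near_limit {k t a b eta L n} : 0 <= L -> 0 <= a -> a <= t -> t <= b ->
  (forall s, 0 <= s <= b -> normH (subH (interp (tau k) (Xs k) s) (X s)) <= eta) ->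
  (forall s, 0 <= s <= b -> normH (subH (X s) (X t)) <= L * `|s - t|) ->
  (Num.truncn (a / tau k) <= n <= Num.truncn (b / tau k))%N ->
  normH (subH (Xs k n) (X t)) <= eta + L * (b - a + tau k).
Proof.
move=> L0 a0 a_t t_b Hcv HL /andP[mn nM].
have /andP[ma1 ma2] := truncn_divr_itv (htau k) a0.
have /andP[Mb1 Mb2] := truncn_divr_itv (htau k) (le_trans a0 (le_trans a_t t_b)).
have n_lo : (Num.truncn (a / tau k))%:R * tau k <= n%:R * tau k.
  by rewrite ler_wpM2r ?ler_nat // ltW.
have n_hi : n%:R * tau k <= (Num.truncn (b / tau k))%:R * tau k.
  by rewrite ler_wpM2r ?ler_nat // ltW.
have n_itv : 0 <= n%:R * tau k <= b.
  by rewrite mulr_ge0 ?(ltW (htau k)) //=; exact: le_trans n_hi Mb1.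
have := Hcv _ n_itv; rewrite interp_nat // => hn.
have hXnT : inH (X (n%:R * tau k)) by apply: hXt; case/andP: n_itv.
have hXt' : inH (X t) by apply: hXt; exact: le_trans a0 a_t.
apply: le_trans (normH_sub_le (scheme_inH (hX0 k) (hmin k) n) hXnT hXt') _.
apply: lerD => //; apply: le_trans (HL _ n_itv) _; rewrite ler_wpM2l //.
by apply/ler_normlP; split; lra.
Qed.

Lemma limit_increment_interp_le {k a b g eta eps} : 0 <= a -> a <= b -> inH g ->
  0 <= eps ->
  normH (subH (interp (tau k) (Xs k) a) (X a)) <= eta ->
  normH (subH (interp (tau k) (Xs k) b) (X b)) <= eta ->
  (forall n, (Num.truncn (a / tau k) <= n <= Num.truncn (b / tau k))%N ->
     normH (subH (G (Xs k n)) g) <= eps) ->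
  normH (addH (subH (X b) (X a)) (scaleH (b - a) g))
    <= 2 * eta + (b - a + tau k) * eps + tau k * normH g.
Proof.
move=> a0 ab hg eps0 ea eb Gnear.
have hI s : inH (interp (tau k) (Xs k) s) by exact: scheme_inH (hX0 k) (hmin k) _.
have hXa := hXt a a0; have hXb := hXt b (le_trans a0 ab).
apply: le_trans (normH_increment_le _ hXa hXb (hI a) (hI b) hg) _.
have := interp_increment_le hF (htau k) (hX0 k) (hmin k) hg eps0 a0 ab Gnear.
rewrite normH_subC ?hI // in eb; lra.
Qed.

Hypothesis hLip : forall T : R, 0 < T -> exists L : R, forall s t, 0 <= s <= T ->
  0 <= t <= T -> normH (subH (X t) (X s)) <= L * `|t - s|.
Hypothesis hcv : forall T : R, 0 < T -> forall eps : R, 0 < eps -> exists K : nat,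
  forall k, (K <= k)%N -> forall t, 0 <= t <= T ->
    normH (subH (interp (tau k) (Xs k) t) (X t)) <= eps.

Lemma limit_increment_le {t} : 0 < t -> forall eps, 0 < eps -> exists2 del, 0 < del &
  forall a b, 0 <= a -> a <= t -> t <= b -> b - a < del ->
  normH (addH (subH (X b) (X a)) (scaleH (b - a) (G (X t)))) <= (b - a) * eps.
Proof.
move=> t0 eps eps0; have hxt := hXt t (ltW t0); have hg := (hF _ hxt).1.
have [rho rho_gt0 Grho] := lambda_convex_gradient_continuous hF hC hxt eps eps0.
have [L HL] := hLip (t + 1) ltac:(lra).
have L1 : 0 < `|L| + 1 by rewrite ltr_pwDr ?normr_ge0.
pose w := rho / (4 * (`|L| + 1)).
have w0 : 0 < w by rewrite divr_gt0 ?mulr_gt0.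
exists (Num.min 1 w) => [|a b a0 a_t t_b]; first by rewrite lt_min ltr01.
rewrite lt_min => /andP[ba1 baw].
have b0 : 0 <= b by lra.
have sub_itv s : 0 <= s <= b -> 0 <= s <= t + 1.
  by case/andP=> s0 sb; rewrite s0 /=; lra.
apply/ler_addgt0Pr => th th0.
pose eta := Num.min (th / 4) (rho / 4).
have eta_th : eta <= th / 4 by rewrite ge_min lexx.
have eta_rho : eta <= rho / 4 by rewrite ge_min lexx orbT.
have [K1 HK1] := hcv (t + 1) ltac:(lra) eta ltac:(by rewrite lt_min !divr_gt0).
pose c := normH (G (X t)) + eps + 1.
have c0 : 0 < c by rewrite /c -addrA ltr_wpDl ?normH_ge0 // addr_gt0.
have /cvgrPdist_lt /(_ (Num.min w (th / (2 * c))))[|K2 _ HK2] := htau0.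
  by rewrite lt_min w0 divr_gt0 ?mulr_gt0.
pose k := maxn K1 K2; have := HK2 k (leq_maxr _ _).
rewrite /= sub0r normrN gtr0_norm // lt_min => /andP[tau_w tau_th].
have {}HK1 s : 0 <= s <= b ->
    normH (subH (interp (tau k) (Xs k) s) (X s)) <= eta.
  by move/sub_itv; apply: HK1; exact: leq_maxl.
have HL' s : 0 <= s <= b -> normH (subH (X s) (X t)) <= (`|L| + 1) * `|s - t|.
  have t_itv : 0 <= t <= t + 1 by apply/andP; split; lra.
  move=> /sub_itv s_itv; apply: le_trans (HL t s t_itv s_itv) _.
  by rewrite ler_wpM2r // ler_wpDr // ler_norm.
have Gnear n : (Num.truncn (a / tau k) <= n <= Num.truncn (b / tau k))%N ->
    normH (subH (G (Xs k n)) (G (X t))) <= eps.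
  move=> n_itv; apply: Grho; first exact: scheme_inH (hX0 k) (hmin k) n.
  apply: le_lt_trans (scheme_near_limit (ltW L1) a0 a_t t_b HK1 HL' n_itv) _.
  have : (`|L| + 1) * (b - a + tau k) < (`|L| + 1) * (2 * w) by rewrite ltr_pM2l //; lra.
  have -> : (`|L| + 1) * (2 * w) = rho / 2 by rewrite /w; field; rewrite gt_eqF.
  lra.
have eb := HK1 b ltac:(by rewrite b0 lexx).
have ea := HK1 a ltac:(apply/andP; split; lra).
apply: le_trans (limit_increment_interp_le a0 (le_trans a_t t_b) hg (ltW eps0) ea eb Gnear) _.
have g0 : 0 <= normH (G (X t)) := normH_ge0 _.
have := htau k; rewrite ltr_pdivlMr ?mulr_gt0 // /c in tau_th; lra.
Qed.

Lemma limit_time_deriv t : 0 < t -> time_deriv_H rho0 X t (scaleH (-1) (G (X t))).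
Proof.
move=> t0 eps eps0; have [del del0 Hinc] := limit_increment_le t0 eps eps0.
exists del => // h /andP[h0 hdel] th0.
have hxt := hXt t (ltW t0); have hg := (hF _ hxt).1; have hxth := hXt _ th0.
have [hpos|hneg] := ltP 0 h.
  have -> : subH (subH (X (t + h)) (X t)) (scaleH h (scaleH (-1) (G (X t)))) =
      addH (subH (X (t + h)) (X t)) (scaleH (t + h - t) (G (X t))) by pointwise_ring.
  rewrite gtr0_norm // in hdel *.
  have := Hinc t (t + h) (ltW t0) (lexx t) ltac:(lra) ltac:(lra).
  by rewrite (_ : t + h - t = h) 1?mulrC //; ring.
have h_lt0 : h < 0 by rewrite lt_neqAle hneg andbT -normr_gt0.
have -> : subH (subH (X (t + h)) (X t)) (scaleH h (scaleH (-1) (G (X t)))) =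
    scaleH (-1) (addH (subH (X t) (X (t + h))) (scaleH (t - (t + h)) (G (X t)))).
  by pointwise_ring.
rewrite normHZ; last by apply: inH_add; [exact: inH_sub | exact: inH_scale].
rewrite normrN1 mul1r ltr0_norm // in hdel *.
have := Hinc (t + h) t th0 ltac:(lra) (lexx t) ltac:(lra).
by rewrite (_ : t - (t + h) = - h) 1?mulrC //; ring.
Qed.

Lemma limit_initial : inH (@IdH R d) ->
  (fun k => normH (subH (Xs k 0%N) (@IdH R d))) @ \oo --> (0 : R) ->
  normH (subH (X 0) (@IdH R d)) = 0.
Proof.
move=> hId /cvgrPdist_lt hcI; apply/le_anti; rewrite normH_ge0 andbT.
apply/ler_addgt0Pr => eps eps0; rewrite add0r.
have [K1 HK1] := hcv 1 ltr01 (eps / 2) (divr_gt0 eps0 (ltr0Sn _ 1)).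
have [K2 _ HK2] := hcI (eps / 2) (divr_gt0 eps0 (ltr0Sn _ 1)).
pose k := maxn K1 K2.
have hX00 := hXt 0 (lexx 0); have hXk0 := scheme_inH (hX0 k) (hmin k) 0.
have := HK1 k (leq_maxl _ _) 0 ltac:(by rewrite lexx ler01).
rewrite /interp mul0r (natrK 0) normH_subC // => h1.
have := HK2 k (leq_maxr _ _); rewrite /= sub0r normrN ger0_norm ?normH_ge0 // => h2.
apply: le_trans (normH_sub_le hX00 hXk0 hId) _; lra.
Qed.

End SchemeLimit.

Lemma loc_abs_cont_of_lipschitz (R : realType) (d : nat) (rho0 : probability (BRd R d) R)
  (X : R -> BRd R d -> BRd R d) :
  (forall T : R, 0 < T -> exists L : R, forall s t, 0 <= s <= T -> 0 <= t <= T ->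
      normH rho0 (subH (X t) (X s)) <= L * `|t - s|) ->
  loc_abs_cont_H rho0 X.
Proof.
move=> hLip T T0 eps eps0; have [L HL] := hLip T T0.
have L1 : 0 < `|L| + 1 by rewrite ltr_pwDr ?normr_ge0.
exists (eps / (`|L| + 1)) => [|n a b hab _]; first by rewrite divr_gt0.
rewrite ltr_pdivlMr // => hsum; apply: le_lt_trans hsum.
rewrite mulr_suml; apply: ler_sum => i _.
have [a0 [ab bT]] := hab i (ltn_ord i).
apply: le_trans (HL (a i) (b i) _ _) _; try by apply/andP; split; lra.
rewrite ger0_norm ?subr_ge0 // mulrC ler_wpM2l ?subr_ge0 //.
by rewrite ler_wpDr // ler_norm.
Qed.

Theorem mainTheorem15 (R : realType) (d : nat)
  (rho0 : probability (BRd R d) R)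
  (phi : (set (BRd R d) -> \bar R) -> R)
  (G : (BRd R d -> BRd R d) -> (BRd R d -> BRd R d))
  (lam : R)
  (tau : nat -> R)
  (Xs : nat -> nat -> BRd R d -> BRd R d)
  (X : R -> BRd R d -> BRd R d) :
  finite_second_moment rho0 ->
  frechet_gradient_on_H rho0 (phi_lift rho0 phi) G ->
  lambda_convex_on_H rho0 lam (phi_lift rho0 phi) ->
  (exists m : R, forall xi, inH rho0 xi -> m <= phi_lift rho0 phi xi) ->
  (forall k, 0 < tau k) ->
  (tau @ \oo --> (0 : R)) ->
  (forall k, 0 < lam / 2 + 1 / tau k) ->
  (lam < 0 -> forall k, `|lam| * tau k < 1) ->
  (forall k, inH rho0 (Xs k 0%N)) ->
  (forall k n, unique_minimizer_H rho0
      (scheme_objective rho0 (phi_lift rho0 phi) G (tau k) (Xs k n)) (Xs k n.+1)) ->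
  ((fun k => normH rho0 (subH (Xs k 0%N) (@IdH R d))) @ \oo --> (0 : R)) ->
  (exists M : R, forall k, normH rho0 (G (Xs k 0%N)) <= M) ->
  (forall t, 0 <= t -> inH rho0 (X t)) ->
  (forall T : R, 0 < T -> exists L : R, forall s t, 0 <= s <= T -> 0 <= t <= T ->
      normH rho0 (subH (X t) (X s)) <= L * `|t - s|) ->
  (forall T : R, 0 < T -> forall eps : R, 0 < eps -> exists K : nat,
      forall k, (K <= k)%N -> forall t, 0 <= t <= T ->
        normH rho0 (subH (interp (tau k) (Xs k) t) (X t)) <= eps) ->
  loc_abs_cont_H rho0 X /\
  {ae (@lebesgue_measure R), forall t : R, 0 < t ->
      time_deriv_H rho0 X t (scaleH (-1) (G (X t)))} /\
  normH rho0 (subH (X 0) (@IdH R d)) = 0.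
Proof.
(* The lower bound on phi, the constraints tying tau to lam and the bound on
   grad phi(X_0^tau) are what produces a limit curve X; here X is given. *)
move=> h2mom hF hC _ htau htau0 _ _ hX0 hmin hXId _ hXt hLip hcv.
have hId : inH rho0 (@IdH R d) by split; [exact: measurable_id | exact: h2mom].
split; first exact: loc_abs_cont_of_lipschitz.
split.
  by apply: aeW => t; exact: limit_time_deriv hF hC htau htau0 hX0 hmin hXt hLip hcv t.
exact: limit_initial hX0 hmin hXt hcv hId hXId.
Qed.
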